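(* Let $M$ be a commutative monoid. A nonempty closed subset $X$ of the terminal space $\mathcal S(M)$ is irreducible if and only if $\mathcal K(X)=\bigcap_{I\in X}I$ is a strongly irreducible ideal of $M$.
   Context: A monoid is a commutative monoid $(M,\cdot,1)$. An ideal of $M$ is a subset $I\subseteq M$ such that $im\in I$ for all $i\in I$, $m\in M$; it is proper if $I\neq M$. A proper ideal $K$ of $M$ is strongly irreducible if for all ideals $I,J$ of $M$, $I\cap J\subseteq K$ implies $I\subseteq K$ or $J\subseteq K$. $\mathcal S(M)$ is the set of all strongly irreducible ideals of $M$. For $X\subseteq\mathcal S(M)$, $\mathcal K(X)=\bigcap_{I\in X}I$, and $\mathcal{HK}(X)=\{J\in\mathcal S(M)\mid J\supseteq\mathcal K(X)\}$ if $X\neq\emptyset$, $\mathcal{HK}(\emptyset)=\emptyset$. The terminal space of $M$ is the set $\mathcal S(M)$ with the topology whose closed sets are exactly the sets $\mathcal{HK}(X)$, $X\subseteq\mathcal S(M)$. A subset $Y$ of a topological space is irreducible if whenever $Y\subseteq Y_1\cup Y_2$ with $Y_1,Y_2$ closed, then $Y\subseteq Y_1$ or $Y\subseteq Y_2$. *)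

Set Implicit Arguments.

Record comMonoid := ComMonoid {
  carrier :> Type;
  mul : carrier -> carrier -> carrier;
  one : carrier;
  mulA : forall x y z, mul x (mul y z) = mul (mul x y) z;
  mulC : forall x y, mul x y = mul y x;
  mul1m : forall x, mul one x = x
}.

Definition subset {T : Type} (A B : T -> Prop) : Prop := forall x, A x -> B x.

Section Terminal.
Variable M : comMonoid.

Definition ideal (I : M -> Prop) : Prop :=
  forall i m, I i -> I (mul M i m).

Definition proper_ideal (I : M -> Prop) : Prop :=
  ideal I /\ exists x : M, ~ I x.

Definition strongly_irreducible (K : M -> Prop) : Prop :=
  proper_ideal K /\
  forall I J : M -> Prop, ideal I -> ideal J ->
    subset (fun x => I x /\ J x) K -> subset I K \/ subset J K.

Definition SM : (M -> Prop) -> Prop := strongly_irreducible.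

Definition Kint (X : (M -> Prop) -> Prop) : M -> Prop :=
  fun x => forall I, X I -> I x.

(* HK(X) = {J in S(M) | J ⊇ K(X)} if X nonempty, and ∅ if X = ∅ *)
Definition HK (X : (M -> Prop) -> Prop) : (M -> Prop) -> Prop :=
  fun J => (exists I, X I) /\ SM J /\ subset (Kint X) J.

Definition terminal_closed (Y : (M -> Prop) -> Prop) : Prop :=
  exists X, subset X SM /\ Y = HK X.

Definition terminal_irreducible (Y : (M -> Prop) -> Prop) : Prop :=
  forall Y1 Y2, terminal_closed Y1 -> terminal_closed Y2 ->
    subset Y (fun J => Y1 J \/ Y2 J) -> subset Y Y1 \/ subset Y Y2.

End Terminal.

(* If K(X) is strongly irreducible it is a point of X contained in every point
   of X, so every closed set containing K(X) contains all of X: X is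
   irreducible.  Conversely, if I ∩ J ⊆ K(X), each point of X contains I or J,
   so X is covered by the closed traces of X above I and above J; by
   irreducibility X lies in one of them, i.e. I ⊆ K(X) or J ⊆ K(X). *)

From Stdlib Require Import FunctionalExtensionality PropExtensionality.

Set Implicit Arguments.
Unset Strict Implicit.

Section TerminalSpace.
Variable M : comMonoid.

Definition above (I P : M -> Prop) : Prop := subset I P.

Lemma Kint_sub (X : (M -> Prop) -> Prop) (P : M -> Prop) :
  X P -> subset (Kint M X) P.
Proof. intros HP x Hx. exact (Hx P HP). Qed.

Lemma Kint_ideal (X : (M -> Prop) -> Prop) :
  subset X (ideal M) -> ideal M (Kint M X).
Proof. intros Hid i m Hi P HP. exact (Hid P HP i m (Hi P HP)). Qed.

Lemma Kint_proper (X : (M -> Prop) -> Prop) :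
  subset X (ideal M) -> (exists P, X P /\ proper_ideal M P) ->
  proper_ideal M (Kint M X).
Proof.
  intros Hid [P [HP [_ [x Hx]]]].
  split; [exact (Kint_ideal Hid) |].
  exists x. intros HxK. exact (Hx (HxK P HP)).
Qed.

Lemma subset_HK (Y : (M -> Prop) -> Prop) :
  subset Y (SM M) -> subset Y (HK M Y).
Proof.
  intros HY P HP. split; [exists P; exact HP |].
  split; [exact (HY P HP) | exact (Kint_sub HP)].
Qed.

Lemma closed_of_HK_sub (Y : (M -> Prop) -> Prop) :
  subset Y (SM M) -> subset (HK M Y) Y -> terminal_closed M Y.
Proof.
  intros HY Hsub. exists Y. split; [exact HY |].
  apply functional_extensionality; intros P.
  apply propositional_extensionality; split; [apply subset_HK, HY | apply Hsub].
Qed.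

Lemma Kint_HK (X0 : (M -> Prop) -> Prop) : subset (Kint M X0) (Kint M (HK M X0)).
Proof. intros x Hx P [_ [_ HP]]. exact (HP x Hx). Qed.

Lemma closed_member (Y : (M -> Prop) -> Prop) (P : M -> Prop) :
  terminal_closed M Y -> (exists I, Y I) -> SM M P -> subset (Kint M Y) P -> Y P.
Proof.
  intros [X0 [_ ->]] [I [HX0 _]] HP HKP.
  split; [exact HX0 |]. split; [exact HP |].
  intros x Hx. exact (HKP x (Kint_HK Hx)).
Qed.

Lemma closed_trace_above (X : (M -> Prop) -> Prop) (I : M -> Prop) :
  subset X (SM M) -> terminal_closed M X ->
  terminal_closed M (fun P => X P /\ above I P).
Proof.
  intros HX Hcl. apply closed_of_HK_sub.
  - intros P [HP _]. exact (HX P HP).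
  - intros P [[Q [HQ _]] [HP HKP]]. split.
    + apply (closed_member Hcl); [exists Q; exact HQ | exact HP |].
      intros x Hx. apply HKP. intros R [HR _]. exact (Hx R HR).
    + intros x Hx. apply HKP. intros R [_ HR]. exact (HR x Hx).
Qed.

Lemma HK_upward (A : (M -> Prop) -> Prop) (P Q : M -> Prop) :
  HK M A P -> SM M Q -> subset P Q -> HK M A Q.
Proof.
  intros [HA [_ HP]] HQ HPQ. split; [exact HA |]. split; [exact HQ |].
  intros x Hx. exact (HPQ x (HP x Hx)).
Qed.

End TerminalSpace.

Theorem theorem2p6 (M : comMonoid) (X : (M -> Prop) -> Prop) :
  subset X (@SM M) -> @terminal_closed M X -> (exists I, X I) ->
  (@terminal_irreducible M X <-> @strongly_irreducible M (@Kint M X)).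
Proof.
  intros HX Hcl Hne.
  assert (Hid : subset X (ideal M)) by (intros P HP; exact (proj1 (proj1 (HX P HP)))).
  split.
  - intros Hirr. split.
    + destruct Hne as [P HP].
      apply Kint_proper; [exact Hid |]. exists P. split; [exact HP | exact (proj1 (HX P HP))].
    + intros I J HI HJ HIJ.
      assert (Hcover : subset X (fun P => (X P /\ above I P) \/ (X P /\ above J P))).
      { intros P HP. destruct (proj2 (HX P HP) I J HI HJ) as [HIP | HJP].
        - intros x Hx. exact (HIJ x Hx P HP).
        - left. split; assumption.
        - right. split; assumption. }
      destruct (Hirr _ _ (closed_trace_above I HX Hcl) (closed_trace_above J HX Hcl) Hcover)
        as [HXI | HXJ].
      * left. intros x Hx P HP. exact (proj2 (HXI P HP) x Hx).
      * right. intros x Hx P HP. exact (proj2 (HXJ P HP) x Hx).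
  - intros HKsi Y1 Y2 [A [_ ->]] [B [_ ->]] Hcover.
    assert (HKX : X (Kint M X)) by (apply (closed_member Hcl Hne HKsi); intros x Hx; exact Hx).
    destruct (Hcover _ HKX) as [HA | HB].
    + left. intros P HP. exact (HK_upward HA (HX P HP) (Kint_sub HP)).
    + right. intros P HP. exact (HK_upward HB (HX P HP) (Kint_sub HP)).
Qed.
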